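(* In the finite-sample setting, run the evaluation algorithm with $\rho_t=\widehat d_t^{\pi^\beta}$ and the finite-sample matrix estimation subroutine. There exists an absolute constant $C>0$ such that for $\delta\in(0,1)$, with probability at least $1-\delta$, \[ \big|\langle\rho_t,Z_t-Y_t\rangle\big|\le CH\sqrt{\frac{S\log(HS/\delta)}{K}}\qquad\text{for all }t\in[H]. \]
   Context: MDP: finite state space $\mathcal S$ ($S=|\mathcal S|$), finite action space $\mathcal A$ ($A=|\mathcal A|$), horizon $H$, transitions $P_t(\cdot\mid s,a)$, rewards $r_t:\mathcal S\times\mathcal A\to[0,1]$, initial distribution $\mu_1$; $\pi^\theta$ target and $\pi^\beta$ behavior policy. Functions on $\mathcal S\times\mathcal A$ are $S\times A$ matrices; $\langle X,Y\rangle=\sum_{s,a}X(s,a)Y(s,a)$. Finite-sample setting: $K$ independent trajectories $(s_t^k,a_t^k,r_t^k)$ generated by $\pi^\beta$; $n_t(s,a)=\sum_k\mathbb 1\{(s_t^k,a_t^k)=(s,a)\}$, $\widehat d_t^{\pi^\beta}=n_t/K$, $\widehat P_t(s'\mid s,a)=\frac1{n_t(s,a)}\sum_k\mathbb 1\{(s_t^k,a_t^k,s_{t+1}^k)=(s,a,s')\}$ for $n_t(s,a)>0$. Algorithm: $\widehat Q_{H+1}=0$; for $t=H,\dots,1$: $Z_t(s,a)=r_t(s,a)+\sum_{s',a'}\widehat P_t(s'\mid s,a)\pi^\theta_{t+1}(a'\mid s')\widehat Q_{t+1}(s',a')$ for $(s,a)\in\operatorname{supp}(\rho_t)$; $Y_t(s,a)=r_t(s,a)+\sum_{s',a'}P_t(s'\mid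 s,a)\pi^\theta_{t+1}(a'\mid s')\widehat Q_{t+1}(s',a')$; $\widehat Q_t$ a minimizer of $\|M\|_{\max}=\min_{M=UV^\top}\|U\|_{2\to\infty}\|V\|_{2\to\infty}$ ($\|\cdot\|_{2\to\infty}$ maximum row Euclidean norm) subject to $|\langle\rho_t,M-Z_t\rangle|\le|\langle\rho_t,Z_t-Y_t\rangle|$ and $\max_{s,a}|M(s,a)|\le H-t+1$. *)

From HB Require Import structures.
From mathcomp Require Import all_boot all_order all_algebra.
From mathcomp Require Import all_classical all_reals all_analysis.
Set Implicit Arguments. Unset Strict Implicit. Unset Printing Implicit Defensive.
Import Order.TTheory GRing.Theory Num.Theory.
Local Open Scope ring_scope.

(* Conventions: states are 'I_S, actions 'I_A; time steps are 0-indexed: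
   paper time t in {1..H} is ordinal t-1 : 'I_H.  A trajectory records the
   states s_1..s_{H+1} (ordinals 0..H of 'I_H.+1) and actions a_1..a_H. *)

Definition traj (S A H : nat) :=
  ({ffun 'I_H.+1 -> 'I_S} * {ffun 'I_H -> 'I_A})%type.
Definition dataset (S A H K : nat) := {ffun 'I_K -> traj S A H}.

Definition cur {H : nat} (t : 'I_H) : 'I_H.+1 := widen_ord (leqnSn H) t.
Definition nxt {H : nat} (t : 'I_H) : 'I_H.+1 := lift ord0 t.

Definition traj_prob {R : realType} {S A H : nat}
  (mu : 'I_S -> R) (piB : 'I_H -> 'I_S -> 'I_A -> R)
  (P : 'I_H -> 'I_S -> 'I_A -> 'I_S -> R) (x : traj S A H) : R :=
  mu (x.1 ord0) *
  \prod_(t < H) (piB t (x.1 (cur t)) (x.2 t) *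
                 P t (x.1 (cur t)) (x.2 t) (x.1 (nxt t))).

Definition data_prob {R : realType} {S A H K : nat}
  (mu : 'I_S -> R) (piB : 'I_H -> 'I_S -> 'I_A -> R)
  (P : 'I_H -> 'I_S -> 'I_A -> 'I_S -> R) (D : dataset S A H K) : R :=
  \prod_(k < K) traj_prob mu piB P (D k).

Definition Prob {R : realType} {S A H K : nat}
  (mu : 'I_S -> R) (piB : 'I_H -> 'I_S -> 'I_A -> R)
  (P : 'I_H -> 'I_S -> 'I_A -> 'I_S -> R) (E : pred (dataset S A H K)) : R :=
  \sum_(D : dataset S A H K | E D) data_prob mu piB P D.

Definition nvis {S A H K : nat} (D : dataset S A H K) (t : 'I_H)
  (s : 'I_S) (a : 'I_A) : nat :=
  #|[set k : 'I_K | ((D k).1 (cur t) == s) && ((D k).2 t == a)]|.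

Definition ntrans {S A H K : nat} (D : dataset S A H K) (t : 'I_H)
  (s : 'I_S) (a : 'I_A) (s' : 'I_S) : nat :=
  #|[set k : 'I_K | [&& (D k).1 (cur t) == s, (D k).2 t == a
                      & (D k).1 (nxt t) == s']]|.

Definition rho {R : realType} {S A H K : nat} (D : dataset S A H K) (t : 'I_H)
  : 'M[R]_(S, A) := \matrix_(s, a) ((nvis D t s a)%:R / K%:R).

(* \hat P_t(s'|s,a); only used where n_t(s,a) > 0 (weighted by rho_t) *)
Definition Phat {R : realType} {S A H K : nat} (D : dataset S A H K) (t : 'I_H)
  (s : 'I_S) (a : 'I_A) (s' : 'I_S) : R :=
  (ntrans D t s a s')%:R / (nvis D t s a)%:R.

Definition Vnext {R : realType} {S A H : nat}
  (piT : 'I_H.+1 -> 'I_S -> 'I_A -> R) (t : 'I_H) (Q : 'M[R]_(S, A))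
  (s' : 'I_S) : R := \sum_(a' < A) piT (nxt t) s' a' * Q s' a'.

Definition Zmat {R : realType} {S A H K : nat}
  (r : 'I_H -> 'I_S -> 'I_A -> R) (piT : 'I_H.+1 -> 'I_S -> 'I_A -> R)
  (D : dataset S A H K) (t : 'I_H) (Q : 'M[R]_(S, A)) : 'M[R]_(S, A) :=
  \matrix_(s, a) (r t s a + \sum_(s' < S) Phat D t s a s' * Vnext piT t Q s').

Definition Ymat {R : realType} {S A H : nat}
  (r : 'I_H -> 'I_S -> 'I_A -> R) (piT : 'I_H.+1 -> 'I_S -> 'I_A -> R)
  (P : 'I_H -> 'I_S -> 'I_A -> 'I_S -> R) (t : 'I_H) (Q : 'M[R]_(S, A))
  : 'M[R]_(S, A) :=
  \matrix_(s, a) (r t s a + \sum_(s' < S) P t s a s' * Vnext piT t Q s').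

Definition mdot {R : realType} {S A : nat} (X Y : 'M[R]_(S, A)) : R :=
  \sum_(s < S) \sum_(a < A) X s a * Y s a.

Definition norm2inf {R : realType} {m k : nat} (U : 'M[R]_(m, k)) : R :=
  \big[Num.max/0]_(i < m) Num.sqrt (\sum_(j < k) U i j ^+ 2).

Definition maxnorm {R : realType} {S A : nat} (M : 'M[R]_(S, A)) : R :=
  inf [set c : R | exists (k : nat) (U : 'M[R]_(S, k)) (V : 'M[R]_(A, k)),
                     M = U *m V^T /\ c = norm2inf U * norm2inf V].

(* feasibility constraints of the matrix-estimation step at (0-indexed) t,
   given Qnext = \hat Q_{t+1}; H - t here equals H - t + 1 in 1-indexed time *)
Definition feasible {R : realType} {S A H K : nat}
  (r : 'I_H -> 'I_S -> 'I_A -> R) (piT : 'I_H.+1 -> 'I_S -> 'I_A -> R)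
  (P : 'I_H -> 'I_S -> 'I_A -> 'I_S -> R) (D : dataset S A H K) (t : 'I_H)
  (Qnext M : 'M[R]_(S, A)) : Prop :=
  `|mdot (rho D t) (M - Zmat r piT D t Qnext)|
     <= `|mdot (rho D t) (Zmat r piT D t Qnext - Ymat r piT P t Qnext)|
  /\ (forall s a, `|M s a| <= (H - t)%:R).

Definition alg_run {R : realType} {S A H K : nat}
  (r : 'I_H -> 'I_S -> 'I_A -> R) (piT : 'I_H.+1 -> 'I_S -> 'I_A -> R)
  (P : 'I_H -> 'I_S -> 'I_A -> 'I_S -> R) (D : dataset S A H K)
  (Q : 'I_H.+1 -> 'M[R]_(S, A)) : Prop :=
  Q ord_max = 0 /\
  forall t : 'I_H,
    feasible r piT P D t (Q (nxt t)) (Q (cur t)) /\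
    (forall M, feasible r piT P D t (Q (nxt t)) M ->
       maxnorm (Q (cur t)) <= maxnorm M).

(* Multiplied by K, the error <rho_t, Z_t - Y_t> becomes a sum over the K trajectories,
     K <rho_t, Z_t - Y_t> = sum_s' V(s') E(s'),
     E(s') = sum_k (1{s_{t+1}^k = s'} - P_t(s' | s_t^k, a_t^k)),
   with V(s') = sum_a' pi^theta_{t+1}(a' | s') \hat Q_{t+1}(s', a') bounded by H.  The weights V
   depend on the data through \hat Q_{t+1}, so the terms are not independent; bounding the
   error by H sum_s' sign(E(s')) E(s') replaces V by one of 2^S fixed sign vectors, and for a
   fixed sign vector the summands are i.i.d. over trajectories, bounded by 2 and centred.
   Hoeffding's inequality with a union bound over the H steps and the 2^S sign vectors gives
   the claim with C = 8. *)

From HB Require Import structures.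
From mathcomp Require Import all_boot all_order all_algebra.
From mathcomp Require Import all_classical all_reals all_analysis.
From mathcomp Require Import ring lra.
Import Order.TTheory GRing.Theory Num.Theory.
Local Open Scope ring_scope.
Set Implicit Arguments. Unset Strict Implicit. Unset Printing Implicit Defensive.

Lemma expR_le_quadratic (R : realType) (y : R) :
  y <= 1 / 2 -> expR y <= 1 + y + 2 * y ^+ 2.
Proof.
move=> y_le.
have expR_yN : expR y * expR (- y) = 1 by rewrite expRN mulfV // gt_eqF ?expR_gt0.
have expR_y_1By : expR y * (1 - y) <= 1.
  by rewrite -[leRHS]expR_yN ler_wpM2l ?expR_ge0 // expR_ge1Dx.
have : 0 <= y ^+ 2 * (1 - 2 * y) by apply: mulr_ge0; [exact: sqr_ge0 | lra].
nra.
Qed.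

Lemma sum_ffun_prod (R : comNzRingType) (T : finType) (K : nat) (F : T -> R) :
  \sum_(D : {ffun 'I_K -> T}) \prod_(k < K) F (D k) = (\sum_(x : T) F x) ^+ K.
Proof. by rewrite -[in RHS](card_ord K) -prodr_const bigA_distr_bigA. Qed.

Lemma sum_pair (R : nmodType) (T1 T2 : finType) (F : T1 * T2 -> R) :
  \sum_(y : T1 * T2) F y = \sum_(y1 : T1) \sum_(y2 : T2) F (y1, y2).
Proof. by rewrite pair_bigA; apply: eq_bigr => -[]. Qed.

Lemma sum_ffun0 (R : nmodType) (T : finType) (c : R) :
  \sum_(g : {ffun 'I_0 -> T}) c = c.
Proof. by rewrite sumr_const card_ffun card_ord expn0. Qed.

Lemma sum_mul_eq_nat (R : pzSemiRingType) (T : finType) (c : T) (F : T -> R) :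
  \sum_(i : T) F i * (i == c)%:R = F c.
Proof. by under eq_bigr do rewrite mulr_natr mulrb; rewrite -big_mkcond big_pred1_eq. Qed.

Lemma natr_card_set (R : pzSemiRingType) (T : finType) (P : pred T) :
  #|[set k | P k]|%:R = \sum_(k : T) (P k)%:R :> R.
Proof.
rewrite -sum1_card natr_sum big_mkcond /=.
by apply: eq_bigr => k _; rewrite inE; case: (P k).
Qed.

Lemma union_bound (R : numDomainType) (T I : finType) (w : T -> R)
    (F : pred T) (E : I -> pred T) :
  (forall x, 0 <= w x) -> (forall x, F x -> exists i, E i x) ->
  \sum_(x | F x) w x <= \sum_i \sum_(x | E i x) w x.
Proof.
move=> w_ge0 F_sub; rewrite (exchange_big_dep predT) //= big_mkcond /=.
apply: ler_sum => x _; have sum_ge0 : 0 <= \sum_(i | E i x) w x by rewrite sumr_ge0.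
case: ifP => // /F_sub[i Eix].
by rewrite (bigD1 i) //= lerDl sumr_ge0.
Qed.

Definition sign_vec {R : numDomainType} {T : finType} (b : {ffun T -> bool}) (x : T) : R :=
  if b x then 1 else -1.

Lemma norm_sign_vec (R : numDomainType) (T : finType) (b : {ffun T -> bool}) x :
  `|sign_vec b x : R| <= 1.
Proof. by rewrite /sign_vec; case: (b x); rewrite ?normrN normr1. Qed.

Lemma norm_sum_mul_le_sign (R : realDomainType) (T : finType) (g E : T -> R) c :
  (forall x, `|g x| <= c) ->
  exists b : {ffun T -> bool}, `|\sum_x g x * E x| <= c * \sum_x sign_vec b x * E x.
Proof.
move=> g_le; exists [ffun x => 0 <= E x].
apply: (le_trans (ler_norm_sum _ _ _)); rewrite mulr_sumr; apply: ler_sum => x _.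
have -> : sign_vec [ffun x => 0 <= E x] x * E x = `|E x|.
  rewrite /sign_vec ffunE; case: leP => [E_ge0|E_lt0].
    by rewrite mul1r ger0_norm.
  by rewrite mulN1r ltr0_norm.
by rewrite normrM ler_wpM2r.
Qed.

Section Hoeffding.

Variables (R : realType) (T : finType) (p f : T -> R) (c : R).
Hypotheses (p_ge0 : forall x, 0 <= p x) (p_sum1 : \sum_x p x = 1).
Hypotheses (f_mean0 : \sum_x p x * f x = 0) (f_bound : forall x, `|f x| <= c).

Lemma mgf_le (l : R) :
  0 <= l -> l * c <= 1 / 2 -> \sum_x p x * expR (l * f x) <= expR (2 * l ^+ 2 * c ^+ 2).
Proof.
move=> l_ge0 lc_le.
have pointwise x : expR (l * f x) <= 1 + l * f x + 2 * l ^+ 2 * c ^+ 2.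
  have lf_le_lc : l * f x <= l * c by rewrite ler_wpM2l // (le_trans (ler_norm _)).
  apply: (le_trans (expR_le_quadratic (le_trans lf_le_lc lc_le))).
  rewrite lerD2l -mulrA ler_pM2l // exprMn ler_wpM2l ?sqr_ge0 //.
  by rewrite -real_normK ?num_real // lerXn2r ?nnegrE // (le_trans _ (f_bound x)).
apply: (le_trans (ler_sum _ (fun x _ => ler_wpM2l (p_ge0 x) (pointwise x)))).
under eq_bigr do rewrite !mulrDr.
rewrite !big_split /= -!mulr_suml p_sum1 mul1r.
under [in X in _ + X + _]eq_bigr do rewrite mulrCA.
by rewrite -mulr_sumr f_mean0 mulr0 addr0 mul1r expR_ge1Dx.
Qed.

Lemma hoeffding_tail (K : nat) (u : R) :
  0 < c -> 0 <= u <= 2 * c ->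
  \sum_(D : {ffun 'I_K -> T} | K%:R * u < \sum_(k < K) f (D k)) \prod_(k < K) p (D k)
    <= expR (- (K%:R * u ^+ 2 / (8 * c ^+ 2))).
Proof.
move=> c_gt0 /andP[u_ge0 u_le].
set l := u / (4 * c ^+ 2).
have l_ge0 : 0 <= l by rewrite divr_ge0 // mulr_ge0 ?sqr_ge0.
have lc_le : l * c <= 1 / 2.
  have -> : l * c = u / (4 * c) by rewrite /l; field; rewrite gt_eqF.
  by rewrite ler_pdivrMr ?mulr_gt0 //; lra.
have chernoff (D : {ffun 'I_K -> T}) :
    (if K%:R * u < \sum_(k < K) f (D k) then \prod_(k < K) p (D k) else 0) <=
    \prod_(k < K) p (D k) * expR (l * (\sum_(k < K) f (D k) - K%:R * u)).
  have prod_ge0 : 0 <= \prod_(k < K) p (D k) by rewrite prodr_ge0.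
  case: ifP => [tail|_]; last by rewrite mulr_ge0 ?expR_ge0.
  rewrite -[leLHS]mulr1 ler_wpM2l //.
  by rewrite -[leLHS]expR0 ler_expR mulr_ge0 // subr_ge0 ltW.
have factor (D : {ffun 'I_K -> T}) :
    \prod_(k < K) p (D k) * expR (l * (\sum_(k < K) f (D k) - K%:R * u)) =
    expR (- (l * (K%:R * u))) * \prod_(k < K) (p (D k) * expR (l * f (D k))).
  by rewrite mulrBr mulr_sumr expRD expR_sum big_split /=; ring.
rewrite big_mkcond /=; apply: (le_trans (ler_sum _ (fun D _ => chernoff D))).
under eq_bigr do rewrite factor.
rewrite -mulr_sumr (sum_ffun_prod K (fun x => p x * expR (l * f x))).
have mgf_ge0 : 0 <= \sum_x p x * expR (l * f x).
  by rewrite sumr_ge0 // => x _; rewrite mulr_ge0 ?expR_ge0.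
apply: (le_trans (ler_wpM2l (expR_ge0 _) (lerXn2r _ _ _ (mgf_le l_ge0 lc_le)))).
- by rewrite nnegrE.
- by rewrite nnegrE expR_ge0.
rewrite -expRM_natl -expRD /l le_eqVlt; apply/orP; left; apply/eqP.
by congr expR; field; rewrite gt_eqF.
Qed.

End Hoeffding.

Lemma widen_ord_lift_max n (j : 'I_n) : widen_ord (leqnSn n) j = lift ord_max j.
Proof. exact/val_inj/esym/lift_max. Qed.

Section FfunRcons.

Variables (T : Type) (n : nat).

Definition ffun_rcons (g : {ffun 'I_n -> T}) (v : T) : {ffun 'I_n.+1 -> T} :=
  [ffun i => if unlift ord_max i is Some j then g j else v].

Lemma ffun_rcons_widen g v j : ffun_rcons g v (widen_ord (leqnSn n) j) = g j.
Proof. by rewrite widen_ord_lift_max ffunE liftK. Qed.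

Lemma ffun_rcons_max g v : ffun_rcons g v ord_max = v.
Proof. by rewrite ffunE unlift_none. Qed.

End FfunRcons.

Lemma sum_ffun_rcons (R : nmodType) (T : finType) n (G : {ffun 'I_n.+1 -> T} -> R) :
  \sum_(f : {ffun 'I_n.+1 -> T}) G f =
  \sum_(g : {ffun 'I_n -> T}) \sum_(v : T) G (ffun_rcons g v).
Proof.
rewrite pair_big /= (reindex (fun gv => ffun_rcons gv.1 gv.2)) //=.
exists (fun f => ([ffun j => f (widen_ord (leqnSn n) j)], f ord_max)).
  move=> [g v] _ /=; rewrite ffun_rcons_max; congr pair.
  by apply/ffunP => j; rewrite ffunE ffun_rcons_widen.
move=> f _; apply/ffunP => i; rewrite ffunE.
by case: unliftP => [j ->|->] //; rewrite ffunE widen_ord_lift_max.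
Qed.

Definition traj_rcons {S A H : nat} (x : traj S A H) (a : 'I_A) (s : 'I_S) :
  traj S A H.+1 := (ffun_rcons x.1 s, ffun_rcons x.2 a).

Definition restrict_horizon {T : Type} {H : nat} (f : 'I_H.+1 -> T) (t : 'I_H) : T :=
  f (widen_ord (leqnSn H) t).

Section TrajRcons.

Variables (S A H : nat) (x : traj S A H) (a : 'I_A) (s : 'I_S).

Lemma traj_rcons_init : (traj_rcons x a s).1 ord0 = x.1 ord0.
Proof.
by rewrite (_ : ord0 = widen_ord (leqnSn H.+1) ord0) ?ffun_rcons_widen //; apply: val_inj.
Qed.

Lemma traj_rcons_cur t : (traj_rcons x a s).1 (cur (widen_ord (leqnSn H) t)) = x.1 (cur t).
Proof.
by rewrite (_ : cur _ = widen_ord (leqnSn H.+1) (cur t)) ?ffun_rcons_widen //; apply: val_inj.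
Qed.

Lemma traj_rcons_nxt t : (traj_rcons x a s).1 (nxt (widen_ord (leqnSn H) t)) = x.1 (nxt t).
Proof.
by rewrite (_ : nxt _ = widen_ord (leqnSn H.+1) (nxt t)) ?ffun_rcons_widen //; apply: val_inj.
Qed.

Lemma traj_rcons_act t : (traj_rcons x a s).2 (widen_ord (leqnSn H) t) = x.2 t.
Proof. exact: ffun_rcons_widen. Qed.

Lemma traj_rcons_cur_max : (traj_rcons x a s).1 (cur ord_max) = x.1 ord_max.
Proof.
by rewrite (_ : cur _ = widen_ord (leqnSn H.+1) ord_max) ?ffun_rcons_widen //; apply: val_inj.
Qed.

Lemma traj_rcons_nxt_max : (traj_rcons x a s).1 (nxt ord_max) = s.
Proof. by rewrite (_ : nxt _ = ord_max) ?ffun_rcons_max //; apply: val_inj. Qed.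

Lemma traj_rcons_act_max : (traj_rcons x a s).2 ord_max = a.
Proof. exact: ffun_rcons_max. Qed.

End TrajRcons.

Lemma sum_traj0 (R : nmodType) S A (F : 'I_S -> R) :
  \sum_(x : traj S A 0) F (x.1 ord0) = \sum_(s < S) F s.
Proof.
rewrite [LHS]sum_pair sum_ffun_rcons -[RHS](sum_ffun0 'I_S).
apply: eq_bigr => g _; apply: eq_bigr => s _.
by rewrite /= (_ : ord0 = ord_max) ?ffun_rcons_max ?sum_ffun0 //; apply: val_inj.
Qed.

Lemma sum_traj_rcons (R : nmodType) S A H (G : traj S A H.+1 -> R) :
  \sum_(x : traj S A H.+1) G x =
  \sum_(x : traj S A H) \sum_(a : 'I_A) \sum_(s : 'I_S) G (traj_rcons x a s).
Proof.
rewrite [LHS]sum_pair [RHS]sum_pair sum_ffun_rcons.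
apply: eq_bigr => f _; rewrite exchange_big sum_ffun_rcons.
by apply: eq_bigr => g _; rewrite exchange_big.
Qed.

Section TrajectoryDistribution.

Variables (R : realType) (S A : nat) (mu : 'I_S -> R).

Lemma traj_prob_ge0 H (piB : 'I_H -> 'I_S -> 'I_A -> R)
    (P : 'I_H -> 'I_S -> 'I_A -> 'I_S -> R) (x : traj S A H) :
  (forall s, 0 <= mu s) -> (forall t s a, 0 <= piB t s a) ->
  (forall t s a s', 0 <= P t s a s') -> 0 <= traj_prob mu piB P x.
Proof.
by move=> mu_ge0 piB_ge0 P_ge0; rewrite mulr_ge0 ?prodr_ge0 // => t _; rewrite mulr_ge0.
Qed.

Lemma traj_prob_rcons H (piB : 'I_H.+1 -> 'I_S -> 'I_A -> R)
    (P : 'I_H.+1 -> 'I_S -> 'I_A -> 'I_S -> R) (x : traj S A H) a s :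
  traj_prob mu piB P (traj_rcons x a s) =
  traj_prob mu (restrict_horizon piB) (restrict_horizon P) x *
    (piB ord_max (x.1 ord_max) a * P ord_max (x.1 ord_max) a s).
Proof.
rewrite /traj_prob big_ord_recr traj_rcons_init.
rewrite traj_rcons_cur_max traj_rcons_nxt_max traj_rcons_act_max.
by under eq_bigr do rewrite traj_rcons_cur traj_rcons_nxt traj_rcons_act; rewrite /= mulrA.
Qed.

Lemma sum_traj_prob_rcons H (piB : 'I_H.+1 -> 'I_S -> 'I_A -> R)
    (P : 'I_H.+1 -> 'I_S -> 'I_A -> 'I_S -> R) (F : traj S A H.+1 -> R) :
  \sum_(x : traj S A H.+1) traj_prob mu piB P x * F x =
  \sum_(x : traj S A H) traj_prob mu (restrict_horizon piB) (restrict_horizon P) x *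
    \sum_(a < A) piB ord_max (x.1 ord_max) a *
      \sum_(s < S) P ord_max (x.1 ord_max) a s * F (traj_rcons x a s).
Proof.
rewrite sum_traj_rcons; apply: eq_bigr => x _; rewrite mulr_sumr.
apply: eq_bigr => a _; rewrite !mulr_sumr; apply: eq_bigr => s _.
by rewrite traj_prob_rcons !mulrA.
Qed.

Lemma traj_prob_sum1 H (piB : 'I_H -> 'I_S -> 'I_A -> R)
    (P : 'I_H -> 'I_S -> 'I_A -> 'I_S -> R) :
  \sum_(s < S) mu s = 1 ->
  (forall t s, \sum_(a < A) piB t s a = 1) ->
  (forall t s a, \sum_(s' < S) P t s a s' = 1) ->
  \sum_(x : traj S A H) traj_prob mu piB P x = 1.
Proof.
move=> mu_sum1; elim: H piB P => [|H IH] piB P piB_sum1 P_sum1.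
  by under eq_bigr do rewrite /traj_prob big_ord0 mulr1; rewrite sum_traj0.
under eq_bigr do rewrite -[traj_prob _ _ _ _]mulr1.
rewrite sum_traj_prob_rcons.
rewrite -[RHS](IH (restrict_horizon piB) (restrict_horizon P)
                  (fun t => piB_sum1 _) (fun t => P_sum1 _)).
apply: eq_bigr => x _; under eq_bigr do under eq_bigr do rewrite mulr1.
by under eq_bigr do rewrite P_sum1 mulr1; rewrite piB_sum1 mulr1.
Qed.

Definition trans_innov H (P : 'I_H -> 'I_S -> 'I_A -> 'I_S -> R) (t : 'I_H)
    (x : traj S A H) (s' : 'I_S) : R :=
  (x.1 (nxt t) == s')%:R - P t (x.1 (cur t)) (x.2 t) s'.

Lemma trans_innov_rcons H (P : 'I_H.+1 -> 'I_S -> 'I_A -> 'I_S -> R) (t : 'I_H)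
    (x : traj S A H) a s s' :
  trans_innov P (lift ord_max t) (traj_rcons x a s) s' =
  trans_innov (restrict_horizon P) t x s'.
Proof.
by rewrite -widen_ord_lift_max /trans_innov traj_rcons_cur traj_rcons_nxt traj_rcons_act.
Qed.

Lemma trans_innov_rcons_max H (P : 'I_H.+1 -> 'I_S -> 'I_A -> 'I_S -> R)
    (x : traj S A H) a s s' :
  trans_innov P ord_max (traj_rcons x a s) s' =
  (s == s')%:R - P ord_max (x.1 ord_max) a s'.
Proof. by rewrite /trans_innov traj_rcons_cur_max traj_rcons_nxt_max traj_rcons_act_max. Qed.

Lemma expect_trans_innov H (piB : 'I_H -> 'I_S -> 'I_A -> R)
    (P : 'I_H -> 'I_S -> 'I_A -> 'I_S -> R) t s' :
  (forall t s, \sum_(a < A) piB t s a = 1) ->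
  (forall t s a, \sum_(s' < S) P t s a s' = 1) ->
  \sum_(x : traj S A H) traj_prob mu piB P x * trans_innov P t x s' = 0.
Proof.
elim: H piB P t => [|H IH] piB P t piB_sum1 P_sum1; first by case: t.
rewrite sum_traj_prob_rcons; case: (unliftP ord_max t) => [t' ->|->].
  rewrite -[RHS](IH (restrict_horizon piB) (restrict_horizon P) t'
                  (fun t => piB_sum1 _) (fun t => P_sum1 _)).
  apply: eq_bigr => x _; under eq_bigr do under eq_bigr do rewrite trans_innov_rcons.
  by under eq_bigr do rewrite -mulr_suml P_sum1 mul1r; rewrite -mulr_suml piB_sum1 mul1r.
apply: big1 => x _; rewrite big1 ?mulr0 // => a _.
under eq_bigr do rewrite trans_innov_rcons_max mulrBr.
by rewrite sumrB sum_mul_eq_nat -mulr_suml P_sum1 mul1r subrr mulr0.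
Qed.

Definition weighted_innov H (P : 'I_H -> 'I_S -> 'I_A -> 'I_S -> R) (t : 'I_H)
    (g : 'I_S -> R) (x : traj S A H) : R :=
  \sum_(s' < S) g s' * trans_innov P t x s'.

Lemma expect_weighted_innov H (piB : 'I_H -> 'I_S -> 'I_A -> R)
    (P : 'I_H -> 'I_S -> 'I_A -> 'I_S -> R) t g :
  (forall t s, \sum_(a < A) piB t s a = 1) ->
  (forall t s a, \sum_(s' < S) P t s a s' = 1) ->
  \sum_(x : traj S A H) traj_prob mu piB P x * weighted_innov P t g x = 0.
Proof.
move=> piB_sum1 P_sum1; under eq_bigr do rewrite mulr_sumr.
rewrite exchange_big big1 // => s' _; under eq_bigr do rewrite mulrCA.
by rewrite -mulr_sumr expect_trans_innov // mulr0.
Qed.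

End TrajectoryDistribution.

Lemma norm_weighted_innov_le (R : realType) S A H (P : 'I_H -> 'I_S -> 'I_A -> 'I_S -> R)
    t (g : 'I_S -> R) (x : traj S A H) :
  (forall t s a s', 0 <= P t s a s') -> (forall t s a, \sum_(s' < S) P t s a s' = 1) ->
  (forall s, `|g s| <= 1) -> `|weighted_innov P t g x| <= 2.
Proof.
move=> P_ge0 P_sum1 g_le1.
have innov_le s' : `|trans_innov P t x s'| <=
    (x.1 (nxt t) == s')%:R + P t (x.1 (cur t)) (x.2 t) s'.
  by rewrite (le_trans (ler_normB _ _)) // normr_nat ger0_norm.
apply: (le_trans (ler_norm_sum _ _ _)).
apply: (@le_trans _ _ (\sum_(s' < S)
    ((x.1 (nxt t) == s')%:R + P t (x.1 (cur t)) (x.2 t) s'))).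
  by apply: ler_sum => s' _; rewrite normrM -[leRHS]mul1r ler_pM ?normr_ge0 ?g_le1 ?innov_le.
rewrite big_split /= P_sum1 (lerD2r 1).
under eq_bigr do rewrite eq_sym -[_%:R]mul1r.
by rewrite sum_mul_eq_nat.
Qed.

Lemma trans_innov_single_state (R : realType) A H (P : 'I_H -> 'I_1 -> 'I_A -> 'I_1 -> R)
    t (x : traj 1 A H) s' :
  (forall t s a, \sum_(s' < 1) P t s a s' = 1) -> trans_innov P t x s' = 0.
Proof.
move=> P_sum1; have := P_sum1 t (x.1 (cur t)) (x.2 t).
by rewrite big_ord1 /trans_innov !ord1 eqxx => ->; rewrite subrr.
Qed.

Section Counts.

Variables (R : realType) (S A H K : nat) (D : dataset S A H K) (t : 'I_H).

Definition visits (s : 'I_S) (a : 'I_A) (k : 'I_K) : bool :=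
  ((D k).1 (cur t) == s) && ((D k).2 t == a).

Lemma nvisE s a : (nvis D t s a)%:R = \sum_(k < K) (visits s a k)%:R :> R.
Proof. exact: natr_card_set. Qed.

Lemma ntransE s a s' :
  (ntrans D t s a s')%:R =
  \sum_(k < K) (visits s a k)%:R * ((D k).1 (nxt t) == s')%:R :> R.
Proof.
by rewrite /ntrans natr_card_set; apply: eq_bigr => k _; rewrite -natrM mulnb andbA.
Qed.

Lemma nvis_mul_Phat s a s' :
  (nvis D t s a)%:R * Phat D t s a s' = (ntrans D t s a s')%:R :> R.
Proof.
have [nvis0|nvis_neq0] := eqVneq (nvis D t s a) 0%N; last first.
  by rewrite /Phat mulrCA mulfV ?mulr1 ?pnatr_eq0.
suff -> : ntrans D t s a s' = 0%N by rewrite nvis0 mul0r.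
apply/eqP; rewrite -leqn0 -nvis0 subset_leq_card //.
by apply/fintype.subsetP => k; rewrite !inE => /and3P[-> ->].
Qed.

Lemma sum_visits (F : 'I_S -> 'I_A -> R) k :
  \sum_(s < S) \sum_(a < A) (visits s a k)%:R * F s a = F ((D k).1 (cur t)) ((D k).2 t).
Proof.
have split_visits s a : (visits s a k)%:R * F s a =
    F s a * (s == (D k).1 (cur t))%:R * (a == (D k).2 t)%:R.
  by rewrite /visits -mulnb natrM [(_ == s)]eq_sym [(_ == a)]eq_sym; ring.
under eq_bigr do under eq_bigr do rewrite split_visits.
by under eq_bigr do rewrite sum_mul_eq_nat; rewrite sum_mul_eq_nat.
Qed.

Lemma visits_mul_trans_innov (P : 'I_H -> 'I_S -> 'I_A -> 'I_S -> R) s a s' k :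
  (visits s a k)%:R * ((D k).1 (nxt t) == s')%:R - (visits s a k)%:R * P t s a s' =
  (visits s a k)%:R * trans_innov P t (D k) s' :> R.
Proof.
rewrite /visits /trans_innov -mulrBr.
by case: eqP => [<-|_]; case: eqP => [<-|_]; rewrite ?mul0r.
Qed.

End Counts.

(* Multiplying by K turns rho_t into the counts n_t, which cancel the denominators of \hat P_t. *)
Lemma mdot_rho_sub (R : realType) S A H K (D : dataset S A H K) t
    (r : 'I_H -> 'I_S -> 'I_A -> R) (piT : 'I_H.+1 -> 'I_S -> 'I_A -> R)
    (P : 'I_H -> 'I_S -> 'I_A -> 'I_S -> R) (Q : 'M[R]_(S, A)) :
  (0 < K)%N ->
  K%:R * mdot (rho D t) (Zmat r piT D t Q - Ymat r piT P t Q) =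
  \sum_(k < K) weighted_innov P t (Vnext piT t Q) (D k).
Proof.
move=> K_gt0; set V := Vnext piT t Q.
transitivity (\sum_(k < K) \sum_(s < S) \sum_(a < A)
    (visits D t s a k)%:R * weighted_innov P t V (D k)); last first.
  by apply: eq_bigr => k _; rewrite sum_visits.
rewrite exchange_big /= /mdot mulr_sumr; apply: eq_bigr => s _.
rewrite exchange_big /= mulr_sumr; apply: eq_bigr => a _.
rewrite !mxE opprD addrACA subrr add0r -sumrB mulrA mulrCA mulfV ?pnatr_eq0 -?lt0n //.
rewrite mulr1 mulr_sumr.
transitivity (\sum_(s' < S) \sum_(k < K)
    (visits D t s a k)%:R * (trans_innov P t (D k) s' * V s')).
  apply: eq_bigr => s' _.
  rewrite -mulrBl mulrA mulrBr nvis_mul_Phat ntransE nvisE mulr_suml -sumrB mulr_suml.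
  by apply: eq_bigr => k _; rewrite visits_mul_trans_innov -mulrA.
rewrite [LHS]exchange_big /=; apply: eq_bigr => k _.
by rewrite /weighted_innov mulr_sumr; apply: eq_bigr => s' _; rewrite [_ * V s']mulrC.
Qed.

Lemma sum_weighted_innov (R : realType) S A H K (D : dataset S A H K)
    (P : 'I_H -> 'I_S -> 'I_A -> 'I_S -> R) t (g : 'I_S -> R) :
  \sum_(k < K) weighted_innov P t g (D k) =
  \sum_(s' < S) g s' * \sum_(k < K) trans_innov P t (D k) s'.
Proof. by rewrite exchange_big; apply: eq_bigr => s' _; rewrite mulr_sumr. Qed.

Lemma norm_Vnext_le (R : realType) S A H (piT : 'I_H.+1 -> 'I_S -> 'I_A -> R) t
    (Q : 'M[R]_(S, A)) (c : R) s' :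
  (forall t s a, 0 <= piT t s a) -> (forall t s, \sum_(a < A) piT t s a = 1) ->
  (forall s a, `|Q s a| <= c) -> `|Vnext piT t Q s'| <= c.
Proof.
move=> piT_ge0 piT_sum1 Q_le; apply: (le_trans (ler_norm_sum _ _ _)).
apply: (@le_trans _ _ (\sum_(a < A) piT (nxt t) s' a * c)).
  by apply: ler_sum => a _; rewrite normrM ger0_norm // ler_wpM2l.
by rewrite -mulr_suml piT_sum1 mul1r.
Qed.

Lemma alg_run_norm_le (R : realType) S A H K (r : 'I_H -> 'I_S -> 'I_A -> R)
    (piT : 'I_H.+1 -> 'I_S -> 'I_A -> R) (P : 'I_H -> 'I_S -> 'I_A -> 'I_S -> R)
    (D : dataset S A H K) (Q : 'I_H.+1 -> 'M[R]_(S, A)) i s a :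
  alg_run r piT P D Q -> `|Q i s a| <= H%:R.
Proof.
case=> Q_last Q_step; case: (unliftP ord_max i) => [j ->|->]; last first.
  by rewrite Q_last mxE normr0.
rewrite -widen_ord_lift_max (_ : widen_ord _ j = cur j) //.
by rewrite (le_trans ((Q_step j).1.2 s a)) // ler_nat leq_subr.
Qed.

Lemma mdot_rho_sub_le_sign (R : realType) S A H K (D : dataset S A H K) t
    (r : 'I_H -> 'I_S -> 'I_A -> R) (piT : 'I_H.+1 -> 'I_S -> 'I_A -> R)
    (P : 'I_H -> 'I_S -> 'I_A -> 'I_S -> R) (Q : 'M[R]_(S, A)) :
  (0 < K)%N ->
  (forall t s a, 0 <= piT t s a) -> (forall t s, \sum_(a < A) piT t s a = 1) ->
  (forall s a, `|Q s a| <= H%:R) ->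
  exists b : {ffun 'I_S -> bool},
    K%:R * `|mdot (rho D t) (Zmat r piT D t Q - Ymat r piT P t Q)| <=
    H%:R * \sum_(k < K) weighted_innov P t (sign_vec b) (D k).
Proof.
move=> K_gt0 piT_ge0 piT_sum1 Q_le.
have [b le_sign] := norm_sum_mul_le_sign (fun s' => \sum_(k < K) trans_innov P t (D k) s')
  (fun s' => norm_Vnext_le t s' piT_ge0 piT_sum1 Q_le).
exists b; rewrite -[K%:R]ger0_norm // -normrM mdot_rho_sub // !sum_weighted_innov.
exact: le_sign.
Qed.

Lemma innov_tail_of_mdot_rho_dev (R : realType) S A H K (D : dataset S A H K) t
    (r : 'I_H -> 'I_S -> 'I_A -> R) (piT : 'I_H.+1 -> 'I_S -> 'I_A -> R)
    (P : 'I_H -> 'I_S -> 'I_A -> 'I_S -> R) (Q : 'M[R]_(S, A)) (u : R) :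
  (0 < K)%N ->
  (forall t s a, 0 <= piT t s a) -> (forall t s, \sum_(a < A) piT t s a = 1) ->
  (forall s a, `|Q s a| <= H%:R) ->
  H%:R * u < `|mdot (rho D t) (Zmat r piT D t Q - Ymat r piT P t Q)| ->
  exists b : {ffun 'I_S -> bool},
    K%:R * u < \sum_(k < K) weighted_innov P t (sign_vec b) (D k).
Proof.
move=> K_gt0 piT_ge0 piT_sum1 Q_le dev.
have [b le_sign] := mdot_rho_sub_le_sign D t r P K_gt0 piT_ge0 piT_sum1 Q_le.
have H_gt0 : (0 : R) < H%:R by rewrite ltr0n (leq_ltn_trans (leq0n t) (ltn_ord t)).
exists b; rewrite -(ltr_pM2l H_gt0); apply: lt_le_trans le_sign.
by rewrite mulrCA ltr_pM2l ?ltr0n.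
Qed.

Lemma expR_confidence_le (R : realType) (H S : nat) (delta : R) :
  (0 < H)%N -> (1 < S)%N -> 0 < delta < 1 ->
  expR (- (2 * S%:R * ln (H%:R * S%:R / delta))) <= delta / (H%:R * 2 ^+ S).
Proof.
move=> H_gt0 S_gt1 /andP[delta_gt0 delta_lt1].
have H_ge1 : (1 : R) <= H%:R by rewrite ler1n.
have S_ge2 : (2 : R) <= S%:R by rewrite ler_nat.
set L := ln (H%:R * S%:R / delta).
have L_ge_ln2 : ln 2 <= L.
  rewrite /L ler_ln ?posrE ?divr_gt0 ?mulr_gt0 //; try lra.
  by rewrite ler_pdivlMr //; nra.
have L_ge_lnH : ln (H%:R / delta) <= L.
  rewrite /L ler_ln ?posrE ?divr_gt0 ?mulr_gt0 //; try lra.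
  by rewrite ler_wpM2r ?invr_ge0 ?ltW //; nra.
have ln2_ge0 : 0 <= ln (2 : R) by rewrite ln_ge0 //; lra.
apply: (@le_trans _ _ (expR (- (S%:R * ln 2 + ln (H%:R / delta))))).
  by rewrite ler_expR lerN2; nra.
rewrite expRN expRD expRM_natl !lnK ?posrE ?divr_gt0 //; last lra.
by rewrite invfM invf_div [X in _ <= _ * X]invfM [X in _ <= _ * X]mulrC mulrCA.
Qed.

Section DataDistribution.

Variables (R : realType) (S A H K : nat) (mu : 'I_S -> R).
Variables (piB : 'I_H -> 'I_S -> 'I_A -> R) (P : 'I_H -> 'I_S -> 'I_A -> 'I_S -> R).
Hypotheses (mu_ge0 : forall s, 0 <= mu s) (mu_sum1 : \sum_(s < S) mu s = 1).
Hypotheses (piB_ge0 : forall t s a, 0 <= piB t s a).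
Hypotheses (piB_sum1 : forall t s, \sum_(a < A) piB t s a = 1).
Hypotheses (P_ge0 : forall t s a s', 0 <= P t s a s').
Hypotheses (P_sum1 : forall t s a, \sum_(s' < S) P t s a s' = 1).

Lemma Prob_predC (E : pred (dataset S A H K)) :
  Prob mu piB P E + Prob mu piB P (predC E) = 1.
Proof.
have <- : \sum_(D : dataset S A H K) data_prob mu piB P D = 1.
  by rewrite (sum_ffun_prod K (traj_prob mu piB P)) traj_prob_sum1 // expr1n.
by rewrite [RHS](bigID E).
Qed.

Lemma norm_sign_innov_le t (b : {ffun 'I_S -> bool}) (x : traj S A H) :
  `|weighted_innov P t (sign_vec b) x| <= 2.
Proof. by apply: norm_weighted_innov_le => // s; exact: norm_sign_vec. Qed.

Lemma Prob_innov_tail_expR t (b : {ffun 'I_S -> bool}) (u : R) :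
  0 <= u <= 4 ->
  Prob mu piB P (fun D : dataset S A H K =>
     K%:R * u < \sum_(k < K) weighted_innov P t (sign_vec b) (D k))
  <= expR (- (K%:R * u ^+ 2 / 32)).
Proof.
move=> /andP[u_ge0 u_le4].
have p_ge0 (x : traj S A H) : 0 <= traj_prob mu piB P x by exact: traj_prob_ge0.
have p_sum1 := traj_prob_sum1 mu_sum1 piB_sum1 P_sum1.
have f_mean0 := expect_weighted_innov mu t (sign_vec b) piB_sum1 P_sum1.
rewrite (_ : 32 = 8 * 2 ^+ 2); last by rewrite -natrX -natrM.
apply: (hoeffding_tail p_ge0 p_sum1 f_mean0 (norm_sign_innov_le t b) K (ltr0n _ 2)).
by rewrite u_ge0 /=; lra.
Qed.

Lemma Prob_innov_tail_le t (b : {ffun 'I_S -> bool}) (delta : R) :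
  (0 < K)%N -> 0 < delta < 1 ->
  Prob mu piB P (fun D : dataset S A H K =>
     K%:R * (8 * Num.sqrt (S%:R * ln (H%:R * S%:R / delta) / K%:R))
       < \sum_(k < K) weighted_innov P t (sign_vec b) (D k))
  <= delta / (H%:R * 2 ^+ S).
Proof.
move=> K_gt0 /andP[delta_gt0 delta_lt1].
have H_gt0 : (0 < H)%N := leq_ltn_trans (leq0n t) (ltn_ord t).
have S_gt0 : (0 < S)%N.
  case: (posnP S) => // S0; move: mu_sum1; rewrite big1 => [/eqP|s _].
    by rewrite eq_sym oner_eq0.
  by have := ltn_ord s; rewrite [X in (_ < X)%N]S0.
set L := ln (H%:R * S%:R / delta).
set u := 8 * Num.sqrt (S%:R * L / K%:R).
have L_ge0 : 0 <= L.
  rewrite ln_ge0 // ler_pdivlMr // mul1r (le_trans (ltW delta_lt1)) //.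
  by rewrite -natrM ler1n muln_gt0 H_gt0 S_gt0.
have u_ge0 : 0 <= u by rewrite mulr_ge0 ?sqrtr_ge0.
have no_tail : (forall D : dataset S A H K,
    \sum_(k < K) weighted_innov P t (sign_vec b) (D k) <= K%:R * u) ->
    Prob mu piB P (fun D => K%:R * u < \sum_(k < K) weighted_innov P t (sign_vec b) (D k))
      <= delta / (H%:R * 2 ^+ S).
  move=> le_Ku; rewrite /Prob big_pred0 => [|D]; last by rewrite ltNge le_Ku.
  by rewrite divr_ge0 ?mulr_ge0 ?exprn_ge0 // ltW.
(* For S = 1 the Hoeffding estimate (delta / H)^2 may exceed delta / (2 H), but with a
   single state every innovation vanishes. *)
have [S_le1|S_gt1] := leqP S 1.
  have {S_le1}S1 : S = 1%N by apply/eqP; rewrite eqn_leq S_le1 S_gt0.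
  apply: no_tail => D; rewrite big1 ?mulr_ge0 // => k _.
  by apply: big1 => s' _; subst S; rewrite trans_innov_single_state ?mulr0.
have [u_gt4|u_le4] := ltrP 4 u.
  apply: no_tail => D; apply: (@le_trans _ _ (\sum_(k < K) (2 : R))).
    by apply: ler_sum => k _; rewrite (le_trans (ler_norm _)) ?norm_sign_innov_le.
  by rewrite sumr_const card_ord -[2 *+ K]mulr_natl ler_wpM2l //; lra.
apply: le_trans (Prob_innov_tail_expR t b _) _; first by rewrite u_ge0 u_le4.
have -> : K%:R * u ^+ 2 / 32 = 2 * S%:R * L.
  rewrite /u exprMn sqr_sqrtr ?divr_ge0 ?mulr_ge0 //; field.
  by rewrite pnatr_eq0 -lt0n.
by rewrite expR_confidence_le // delta_gt0.
Qed.

End DataDistribution.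

Unset Implicit Arguments.

Theorem lemma4 (R : realType) :
  exists C : R, 0 < C /\
  forall (S A H K : nat)
    (mu : 'I_S -> R)
    (piB : 'I_H -> 'I_S -> 'I_A -> R)
    (piT : 'I_H.+1 -> 'I_S -> 'I_A -> R)
    (P : 'I_H -> 'I_S -> 'I_A -> 'I_S -> R)
    (r : 'I_H -> 'I_S -> 'I_A -> R)
    (delta : R),
    (0 < K)%N ->
    (forall s, 0 <= mu s) -> \sum_(s < S) mu s = 1 ->
    (forall t s a, 0 <= piB t s a) -> (forall t s, \sum_(a < A) piB t s a = 1) ->
    (forall t s a, 0 <= piT t s a) -> (forall t s, \sum_(a < A) piT t s a = 1) ->
    (forall t s a s', 0 <= P t s a s') ->
    (forall t s a, \sum_(s' < S) P t s a s' = 1) ->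
    (forall t s a, 0 <= r t s a <= 1) ->
    0 < delta < 1 ->
    forall Qhat : dataset S A H K -> 'I_H.+1 -> 'M[R]_(S, A),
      (forall D, alg_run r piT P D (Qhat D)) ->
      1 - delta <=
        Prob mu piB P (fun D : dataset S A H K =>
          [forall t : 'I_H,
             `|mdot (rho D t) (Zmat r piT D t (Qhat D (nxt t))
                                - Ymat r piT P t (Qhat D (nxt t)))|
             <= C * H%:R * Num.sqrt (S%:R * ln (H%:R * S%:R / delta) / K%:R)]).
Proof.
exists 8; split => // S A H K mu piB piT P r delta K_gt0 mu_ge0 mu_sum1 piB_ge0 piB_sum1
  piT_ge0 piT_sum1 P_ge0 P_sum1 _ delta_bd Qhat run.
pose u := 8 * Num.sqrt (S%:R * ln (H%:R * S%:R / delta) / K%:R).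
set good := fun D => _.
pose tail (tb : 'I_H * {ffun 'I_S -> bool}) (D : dataset S A H K) :=
  K%:R * u < \sum_(k < K) weighted_innov P tb.1 (sign_vec tb.2) (D k).
have bad_tail D : ~~ good D -> exists tb, tail tb D.
  rewrite negb_forall => /existsP[t]; rewrite -ltNge -mulrA mulrCA => dev.
  have [b tail_b] := innov_tail_of_mdot_rho_dev K_gt0 piT_ge0 piT_sum1
    (fun s a => alg_run_norm_le (nxt t) s a (run D)) dev.
  by exists (t, b).
suff : Prob mu piB P (predC good) <= delta.
  by have := Prob_predC mu_sum1 piB_sum1 P_sum1 good; lra.
have data_prob_ge0 (D : dataset S A H K) : 0 <= data_prob mu piB P D.
  by apply: prodr_ge0 => k _; exact: traj_prob_ge0.
apply: le_trans (union_bound (F := predC good) data_prob_ge0 bad_tail) _.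
apply: le_trans (ler_sum _ (fun tb _ => Prob_innov_tail_le mu_ge0 mu_sum1 piB_ge0 piB_sum1
  P_ge0 P_sum1 tb.1 tb.2 K_gt0 delta_bd)) _.
rewrite sumr_const card_prod card_ffun card_bool !card_ord.
have [->|H_gt0] := posnP H; first by rewrite mul0n mulr0n ltW //; case/andP: delta_bd.
by rewrite -[_ *+ _]mulr_natr natrM natrX divfK // mulf_neq0 ?expf_neq0 ?pnatr_eq0 -?lt0n.
Qed.
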